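(* **Part (a).** Let $R\in\mathfrak{D}'\subseteq\mathfrak{D}$ with $\mathfrak{G}_{\mathfrak{D}'}(R)\subseteq\mathfrak{D}'$, where $$\mathfrak{G}_{\mathfrak{D}'}(R)=\{\mathcal{G}(\xi):\xi\in\mathcal{H}(G,R),\ G\in\mathfrak{D}'\}.$$ Then for every $S\in\mathfrak{D}$, the relation $R\sqsubseteq_\Gamma S$ with respect to $\mathfrak{D}'$ holds if and only if for every $\mathfrak{g}\in\mathfrak{G}_{\mathfrak{D}'}(R)$ there exists an injective map $\sigma_{\mathfrak{g}}:\mathcal{S}(\mathfrak{g},R)\to\mathcal{S}(\mathfrak{g},S)$. In this case, a strong $\Gamma$-scheme $\rho$ from $R$ to $S$ with respect to $\mathfrak{D}'$ is given by $$\rho_G(\xi)=\sigma_{\mathcal{G}(\xi)}(\iota_\xi)\circ\pi_\xi\quad\text{for } G\in\mathfrak{D}'_r,\ \xi\in\mathcal{H}(G,R).$$ **Part (b).** Let $\mathfrak{D}'\subseteq\mathfrak{P}$ or $\mathfrak{D}'\subseteq\mathfrak{P}^*$, and let $R\in\mathfrak{D}'$. Put $$\mathfrak{T}_{\mathfrak{D}'}(R)=\{\mathcal{T}(\xi):\xi\in\mathcal{H}(G,R),\ G\in\mathfrak{D}'\},$$ and assume $\mathfrak{T}_{\mathfrak{D}'}(R)\subseteq\mathfrak{D}'$. Then for every $S\in\mathfrak{D}$, $R\sqsubseteq_\Gamma S$ with respect to $\mathfrak{D}'$ holds if and only if for every $\mathfrak{t}\in\mathfrak{T}_{\mathfrak{D}'}(R)$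 there exists an injective map $\sigma_{\mathfrak{t}}:\mathcal{S}(\mathfrak{t},R)\to\mathcal{S}(\mathfrak{t},S)$. In this case, $\rho_G(\xi)=\sigma_{\mathcal{T}(\xi)}(\iota_\xi)\circ\pi_\xi$ defines a strong $\Gamma$-scheme from $R$ to $S$ with respect to $\mathfrak{D}'$. Here $\iota_\xi$ is regarded as a map on $V(\mathcal{T}(\xi))=V(\mathcal{G}(\xi))$.
   Context: **Digraphs and homomorphisms.** - A digraph $G$ is a pair $(V(G),A(G))$, where $V(G)$ is a finite non-empty set and $A(G)\subseteq V(G)\times V(G)$. Arcs are written $vw$. - An arc $vv$ is a loop. An arc $vw$ with $v\ne w$ is proper. $G^*$ is $G$ with all loops removed. - A homomorphism $\xi:G\to H$ is a map $V(G)\to V(H)$ with $\xi(v)\xi(w)\in A(H)$ for all $vw\in A(G)$. $\mathcal{H}(G,H)$ is the set of homomorphisms. - A homomorphism is strict if it maps every proper arc to a proper arc. $\mathcal{S}(G,H)$ is the set of strict homomorphisms. - The transitive hull of a digraph $G$ is the digraph on $V(G)$ whose arc set is the smallest transitive relation containing $A(G)$. **Classes of digraphs.** - $\mathfrak{D}$ is the class of all digraphs. - $\mathfrak{P}$ is the class of finite posets, i.e. reflexive, antisymmetric, transitive digraphs. - $\mathfrak{P}^*=\{P^*:P\in\mathfrak{P}\}$. **Connectivity.** - Two vertices $u,w$ are adjacent if $uw\in A(G)$ or $wu\in A(G)$. - For $X\subseteq V(G)$ and $v,w\in X$, the vertices $v$ and $w$ are connected in $X$ if $v=w$, or if there are $z_0=v,\dots,z_I=w$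 in $X$ with consecutive terms adjacent. - $\gamma_X(v)$ is the set of $w\in X$ connected to $v$ in $X$. - $\Gamma_\xi(v):=\gamma_{\xi^{-1}(\xi(v))}(v)$. **The quotient digraph.** For $\xi\in\mathcal{H}(G,H)$: - $\mathcal{G}(\xi)$ is the digraph with vertex set $\{\Gamma_\xi(v):v\in V(G)\}$, and $\mathfrak{a}\mathfrak{b}$ is an arc iff there are $a\in\mathfrak{a}$, $b\in\mathfrak{b}$ with $ab\in A(G)$. - $\mathcal{T}(\xi)$ is the transitive hull of $\mathcal{G}(\xi)$. - $\pi_\xi$ is the map $v\mapsto\Gamma_\xi(v)$. - $\iota_\xi$ is the map $\Gamma_\xi(v)\mapsto\xi(v)$. **Schemes.** - $\mathfrak{D}'_r$ is a fixed system of representatives of $\mathfrak{D}'$ up to isomorphism. - A Hom-scheme from $R$ to $S$ with respect to $\mathfrak{D}'$ is a family of maps $\rho_G:\mathcal{H}(G,R)\to\mathcal{H}(G,S)$, $G\in\mathfrak{D}'_r$. - It is strong if all $\rho_G$ are injective. - It is a $\Gamma$-scheme if $\Gamma_{\rho_G(\xi)}(v)=\Gamma_\xi(v)$ for all $G$, $\xi$ and $v$. - $R\sqsubseteq_\Gamma S$ with respect to $\mathfrak{D}'$ means that a strong $\Gamma$-scheme exists. *)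

From mathcomp Require Import all_boot.
Set Implicit Arguments. Unset Strict Implicit. Unset Printing Implicit Defensive.

Record digraph := Digraph {
  vert : finType;
  arc : rel vert;
  vert_nonempty : 0 < #|vert| }.

Definition some_vertex (G : digraph) : vert G :=
  enum_val (Ordinal (vert_nonempty G)).

Definition is_hom (G H : digraph) (xi : {ffun vert G -> vert H}) : bool :=
  [forall v, forall w, arc v w ==> arc (xi v) (xi w)].

Definition is_strict (G H : digraph) (xi : {ffun vert G -> vert H}) : bool :=
  is_hom xi && [forall v, forall w, ((v != w) && arc v w) ==> (xi v != xi w)].

Definition adjacent (G : digraph) (u w : vert G) : bool := arc u w || arc w u.

Definition gamma (G : digraph) (X : {set vert G}) (v : vert G) : {set vert G} :=
  [set w in X | connect (fun a b => [&& a \in X, b \in X & adjacent a b]) v w].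

Definition fiber (G H : digraph) (xi : {ffun vert G -> vert H}) (v : vert G)
  : {set vert G} := [set w | xi w == xi v].

Definition Gam (G H : digraph) (xi : {ffun vert G -> vert H}) (v : vert G)
  : {set vert G} := gamma (fiber xi v) v.

Definition qpred (G H : digraph) (xi : {ffun vert G -> vert H}) : pred {set vert G} :=
  fun A => [exists v, A == Gam xi v].

Definition qvert (G H : digraph) (xi : {ffun vert G -> vert H}) : finType :=
  {A : {set vert G} | qpred xi A}.

Lemma Gam_in_qpred (G H : digraph) (xi : {ffun vert G -> vert H}) (v : vert G) :
  qpred xi (Gam xi v).
Proof. by apply/existsP; exists v. Qed.

Definition qpi (G H : digraph) (xi : {ffun vert G -> vert H}) (v : vert G)
  : qvert xi := exist _ (Gam xi v) (Gam_in_qpred xi v).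

Lemma qvert_nonempty (G H : digraph) (xi : {ffun vert G -> vert H}) :
  0 < #|qvert xi|.
Proof. by apply/card_gt0P; exists (qpi xi (some_vertex G)). Qed.

Definition qarc (G H : digraph) (xi : {ffun vert G -> vert H}) : rel (qvert xi) :=
  fun A B => [exists a in val A, exists b in val B, arc a b].

Definition quot (G H : digraph) (xi : {ffun vert G -> vert H}) : digraph :=
  @Digraph (qvert xi) (@qarc G H xi) (qvert_nonempty xi).

Definition trans_hull_rel (T : finType) (e : rel T) : rel T :=
  fun a b => [exists z, e a z && connect e z b].

Definition tquot (G H : digraph) (xi : {ffun vert G -> vert H}) : digraph :=
  @Digraph (qvert xi) (trans_hull_rel (@qarc G H xi)) (qvert_nonempty xi).

(** iota_xi : Gamma_xi(v) |-> xi(v) (well defined; we evaluate xi at some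
    element of the class). *)
Definition qiota (G H : digraph) (xi : {ffun vert G -> vert H})
  : {ffun vert (quot xi) -> vert H} :=
  [ffun A : qvert xi => xi (odflt (some_vertex G) [pick a in val A])].

Definition iso (G H : digraph) : Prop :=
  exists f : vert G -> vert H, bijective f /\ forall v w, arc (f v) (f w) = arc v w.

Definition rep_system (D' Dr : digraph -> Prop) : Prop :=
  (forall G, Dr G -> D' G) /\
  (forall G, D' G -> exists H, Dr H /\ iso G H) /\
  (forall H1 H2, Dr H1 -> Dr H2 -> iso H1 H2 -> H1 = H2).

(** A map H(G,R) -> H(G,S) is modelled as a
    function on finite functions mapping homomorphisms to homomorphisms. *)
Definition strong_Gamma_scheme (Dr : digraph -> Prop) (R S : digraph)
  (rho : forall G : digraph, {ffun vert G -> vert R} -> {ffun vert G -> vert S})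
  : Prop :=
  forall G, Dr G ->
    (forall xi, is_hom xi -> is_hom (rho G xi)) /\
    {in [pred xi | is_hom xi] &, injective (rho G)} /\
    (forall xi, is_hom xi -> forall v, Gam (rho G xi) v = Gam xi v).

Arguments strong_Gamma_scheme : clear implicits.

Definition Gamma_below (Dr : digraph -> Prop) (R S : digraph) : Prop :=
  exists rho, strong_Gamma_scheme Dr R S rho.

Definition strict_inj (g R S : digraph)
  (sigma : {ffun vert g -> vert R} -> {ffun vert g -> vert S}) : Prop :=
  (forall f, is_strict f -> is_strict (sigma f)) /\
  {in [pred f | is_strict f] &, injective sigma}.

Definition Gclass (D' : digraph -> Prop) (R g : digraph) : Prop :=
  exists (G : digraph) (xi : {ffun vert G -> vert R}), D' G /\ is_hom xi /\ g = quot xi.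

Definition Tclass (D' : digraph -> Prop) (R t : digraph) : Prop :=
  exists (G : digraph) (xi : {ffun vert G -> vert R}), D' G /\ is_hom xi /\ t = tquot xi.

Definition is_poset (G : digraph) : Prop :=
  reflexive (@arc G) /\ antisymmetric (@arc G) /\ transitive (@arc G).

Definition remove_loops (G : digraph) : digraph :=
  @Digraph (vert G) (fun a b => (a != b) && arc a b) (vert_nonempty G).

Definition in_P (G : digraph) : Prop := is_poset G.
Definition in_Pstar (G : digraph) : Prop := exists P, is_poset P /\ G = remove_loops P.

From mathcomp Require Import all_boot.
(* Imported after [all_boot], so that [arc] is the digraph field and not the
   sequence operation of [path]. *)
From Stdlib Require Import FunctionalExtensionality Classical IndefiniteDescription.
Set Implicit Arguments. Unset Strict Implicit. Unset Printing Implicit Defensive.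

(** For a homomorphism [xi : G -> R], the projection [qpi xi] onto the
    components [Gam xi v] of the fibres of [xi] is a homomorphism and [xi]
    factors as [qiota xi \o qpi xi], where [qiota xi] is STRICT on the quotient
    [quot xi], and, when [R] is a (loopless) poset, also on its transitive hull
    [tquot xi].  Moreover [Gam xi] only depends on which adjacent pairs [xi]
    identifies.

    Both parts are then treated at once: we fix an arc relation [ar] on the
    blocks of a partition which contains the quotient arcs ([block_arc] for (a),
    its transitive hull for (b)) and for which [qiota xi] is strict.  Given
    injections [sigma] of strict maps, [rho xi := sigma (qiota xi) \o qpi xi]
    is a strong Gamma-scheme: it keeps the components of [xi], and [xi] is
    recovered from [rho xi] because equal components give the same quotient.
    Conversely a strong Gamma-scheme [rho] yields the injections
    [f |-> rho (f \o psi) \o phi] through an isomorphism [phi] with a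
    representative, since a homomorphism with the components of a strict map
    is strict. *)

Section StrictMaps.
Variables G H : digraph.
Implicit Type f : {ffun vert G -> vert H}.

Lemma homP f : reflect (forall a b, arc a b -> arc (f a) (f b)) (is_hom f).
Proof.
apply: (iffP forallP) => [h a b | h a]; first exact: (implyP (forallP (h a) b)).
by apply/forallP => b; apply/implyP; apply: h.
Qed.

Lemma strictP f :
  reflect (is_hom f /\ forall a b, a != b -> arc a b -> f a != f b) (is_strict f).
Proof.
apply: (iffP andP) => -[hf h]; split=> //.
  by move=> a b ab e; apply: (implyP (forallP (forallP h a) b)); rewrite ab e.
by apply/forallP => a; apply/forallP => b; apply/implyP => /andP[]; apply: h.
Qed.

Lemma strict_adjacent f a b : is_strict f -> a != b -> adjacent a b -> f a != f b.
Proof.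
case/strictP=> _ hf ne /orP[ab | ba]; first exact: hf.
by rewrite eq_sym; apply: hf; rewrite // eq_sym.
Qed.

End StrictMaps.

Lemma strict_comp (G H K : digraph) (phi : vert G -> vert H)
    (f : {ffun vert H -> vert K}) :
  injective phi -> (forall a b, arc a b -> arc (phi a) (phi b)) ->
  is_strict f -> is_strict [ffun v => f (phi v)].
Proof.
move=> inj_phi hphi /strictP[/homP hf sf]; apply/strictP; split.
  by apply/homP => a b ab; rewrite !ffunE; apply/hf/hphi.
by move=> a b ne ab; rewrite !ffunE; apply: sf (hphi _ _ ab); rewrite inj_eq.
Qed.

Lemma connect_stable (T : finType) (e : rel T) (P : pred T) x y :
  (forall a b, P a -> e a b -> P b) -> P x -> connect e x y -> P y.
Proof.
move=> stable Px /connectP[p pth ->].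
by elim: p x Px pth => //= z p IH x Px /andP[xz]; apply: IH (stable _ _ Px xz).
Qed.

Definition adj_in (G : digraph) (X : {set vert G}) : rel (vert G) :=
  fun a b => [&& a \in X, b \in X & adjacent a b].

Lemma adj_in_sym (G : digraph) (X : {set vert G}) : symmetric (adj_in X).
Proof. by move=> a b; rewrite /adj_in /adjacent andbCA orbC. Qed.

Section Components.
Variables G H : digraph.
Variable xi : {ffun vert G -> vert H}.

Lemma mem_Gam v w :
  (w \in Gam xi v) = (xi w == xi v) && connect (adj_in (fiber xi v)) v w.
Proof. by rewrite /Gam /gamma inE /fiber inE. Qed.

Lemma Gam_self v : v \in Gam xi v.
Proof. by rewrite mem_Gam eqxx connect0. Qed.

Lemma Gam_fiber v w : w \in Gam xi v -> xi w = xi v.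
Proof. by rewrite mem_Gam => /andP[/eqP]. Qed.

Lemma Gam_eq v w : w \in Gam xi v -> Gam xi w = Gam xi v.
Proof.
rewrite mem_Gam => /andP[/eqP xiw cvw].
have fib : fiber xi w = fiber xi v by apply/setP => u; rewrite !inE xiw.
have cwv : connect (adj_in (fiber xi v)) w v.
  by rewrite (sym_connect_sym (@adj_in_sym _ _)).
apply/setP => u; rewrite !mem_Gam fib xiw; case: (xi u == xi v) => //=.
by apply/idP/idP; apply: connect_trans.
Qed.

Lemma adjacent_Gam a b : adjacent a b -> xi a = xi b -> b \in Gam xi a.
Proof.
by move=> ab e; rewrite mem_Gam e eqxx connect1 //= /adj_in !inE e eqxx.
Qed.

Lemma qpi_fiber a b : qpi xi a = qpi xi b -> xi a = xi b.
Proof. by move/(congr1 val) => /= e; apply: Gam_fiber; rewrite -e Gam_self. Qed.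

Lemma qpi_Gam a v : a \in Gam xi v -> qpi xi a = qpi xi v.
Proof. by move=> h; apply: val_inj; rewrite /= (Gam_eq h). Qed.

Lemma qpi_adjacent a b : adjacent a b -> xi a = xi b -> qpi xi a = qpi xi b.
Proof. by move=> ab e; symmetry; apply/qpi_Gam/adjacent_Gam. Qed.

Lemma qpi_surj (A : qvert xi) : exists v, A = qpi xi v.
Proof. by case: A => A hA; have [v /eqP eA] := existsP hA; exists v; apply: val_inj. Qed.

Lemma qiota_pi v : qiota xi (qpi xi v) = xi v.
Proof.
rewrite ffunE /=; case: pickP => [a | /(_ v)]; first exact: Gam_fiber.
by rewrite Gam_self.
Qed.

Lemma qarc_pi v w : arc v w -> qarc (qpi xi v) (qpi xi w).
Proof.
move=> vw; apply/existsP; exists v; rewrite /= Gam_self /=.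
by apply/existsP; exists w; rewrite Gam_self.
Qed.

Lemma qarcP (A B : qvert xi) :
  qarc A B -> exists a b, [/\ A = qpi xi a, B = qpi xi b & arc a b].
Proof.
have [v ->] := qpi_surj A; have [w ->] := qpi_surj B.
case/existsP=> a /andP[ha /existsP[b /andP[hb ab]]].
by exists a, b; rewrite (qpi_Gam ha) (qpi_Gam hb).
Qed.

(** Part of the factorisation: [qiota xi] is a strict homomorphism on the
    quotient digraph, since distinct adjacent blocks carry distinct values. *)
Lemma qiota_strict : is_hom xi -> @is_strict (quot xi) H (qiota xi).
Proof.
move=> /homP hx; apply/strictP; split.
  by apply/homP => A B /qarcP[a [b [-> -> ab]]]; rewrite !qiota_pi; apply: hx.
move=> A B + /qarcP[a [b [eA eB ab]]]; rewrite eA eB !qiota_pi.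
by apply: contra => /eqP e; apply/eqP; apply: qpi_adjacent; rewrite // /adjacent ab.
Qed.

End Components.

Lemma Gam_ext (G S1 S2 : digraph)
    (f : {ffun vert G -> vert S1}) (g : {ffun vert G -> vert S2}) :
  (forall a b, adjacent a b -> (f a == f b) = (g a == g b)) ->
  forall v, Gam f v = Gam g v.
Proof.
suff sub : forall S1 S2 (f : {ffun vert G -> vert S1}) (g : {ffun vert G -> vert S2}),
    (forall a b, adjacent a b -> (f a == f b) = (g a == g b)) ->
    forall v, Gam f v \subset Gam g v.
  by move=> h v; apply/eqP; rewrite eqEsubset !sub // => a b /h ->.
move=> {}S1 {}S2 {}f {}g h v; apply/subsetP => w.
rewrite mem_Gam => /andP[_].
apply: (@connect_stable _ _ (fun x => x \in Gam g v)) (Gam_self g v) => a b /= ag.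
case/and3P; rewrite !inE => /eqP fa /eqP fb ab.
have gab : g a = g b by apply/eqP; rewrite -h // fa fb.
have gav := Gam_fiber ag; move: ag; rewrite !mem_Gam -gab gav eqxx /=.
by move/connect_trans; apply; rewrite connect1 //= /adj_in !inE -gab gav eqxx.
Qed.

(** A homomorphism with the same components as a strict map is strict: an arc
    inside a component of [f] lies in a component of the strict map [g]. *)
Lemma strict_Gam (G S T : digraph)
    (f : {ffun vert G -> vert S}) (g : {ffun vert G -> vert T}) :
  is_hom f -> is_strict g -> (forall v, Gam f v = Gam g v) -> is_strict f.
Proof.
move=> hf sg eGam; apply/strictP; split=> // a b ne ab; apply/eqP => fab.
have : b \in Gam f a by apply: adjacent_Gam; rewrite // /adjacent ab.
rewrite eGam => /Gam_fiber gba.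
by move: (strict_adjacent sg ne); rewrite /adjacent ab gba eqxx => /(_ isT).
Qed.

Lemma path_arc (T : finType) (e : rel T) (R : digraph) (f : T -> vert R) :
  transitive (@arc R) -> (forall a b, e a b -> arc (f a) (f b)) ->
  forall x y p, e x y -> path e y p -> arc (f x) (f (last y p)).
Proof.
move=> tr hf x y p; elim: p x y => [|z p IH] x y /= xy; first by rewrite hf.
by case/andP=> yz pz; apply: tr (IH _ _ yz pz); apply: hf.
Qed.

Section TransitiveHull.
Variables (G R : digraph) (xi : {ffun vert G -> vert R}).
Hypotheses (trR : transitive (@arc R)) (antiR : antisymmetric (@arc R)).
Hypothesis hom_xi : is_hom xi.

(** In a transitive antisymmetric target, a closed [qarc]-walk along which
    [qiota xi] returns to its starting value is constant, since [qiota xi] is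
    strict on the quotient. *)
Lemma qarc_walk_closed (A : qvert xi) p :
  path (@qarc G R xi) A p -> qiota xi (last A p) = qiota xi A -> last A p = A.
Proof.
have /strictP[/homP qhom qsep] := qiota_strict hom_xi.
elim: p A => [|B p IH] A //= /andP[AB pB] back.
have eAB : qiota xi B = qiota xi A.
  case: p pB back {IH} => [_ -> // | C p /= /andP[BC pC] back].
  apply: antiR; rewrite [X in _ && X]qhom // andbT -[X in arc _ X]back.
  exact: path_arc trR qhom _ _ _ BC pC.
have -> : A = B.
  by apply/eqP; apply: contraT => /qsep /(_ AB); rewrite eAB eqxx.
exact: IH pB (etrans back (esym eAB)).
Qed.

Lemma qiota_tquot_strict : @is_strict (tquot xi) R (qiota xi).
Proof.
have /strictP[/homP qhom _] := qiota_strict hom_xi.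
apply/strictP; split.
  apply/homP => A B /existsP[C /andP[AC /connectP[p pC ->]]].
  exact: path_arc trR qhom _ _ _ AC pC.
move=> A B ne /existsP[C /andP[AC /connectP[p pC eB]]]; apply: contra ne => /eqP e.
have walk : path (@qarc G R xi) A (C :: p) by rewrite /= AC.
by rewrite eB -[last C p]/(last A (C :: p)) (qarc_walk_closed walk) //= -eB e.
Qed.

End TransitiveHull.

Lemma poset_trans_anti (R : digraph) :
  in_P R \/ in_Pstar R -> transitive (@arc R) /\ antisymmetric (@arc R).
Proof.
case=> [[_ [anti tr]] | [P [[_ [anti tr]] ->]]]; first by [].
split=> [b a c /andP[ab le_ab] /andP[bc le_bc] | a b /andP[/andP[_ le_ab] /andP[_ le_ba]]].
  rewrite /= (tr _ _ _ le_ab le_bc) andbT; apply: contra ab => /eqP eac.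
  by apply/eqP/anti; rewrite le_ab eac.
by apply: anti; rewrite le_ab.
Qed.

(** Necessity: a strong Gamma-scheme provides, for every [g] in [D'], an
    injection of strict maps [f |-> rho (f \o psi) \o phi], where
    [phi : g -> H] is an isomorphism onto a representative with inverse [psi]. *)
Lemma Gamma_below_strict_inj (D' Dr : digraph -> Prop) (R S : digraph) :
  rep_system D' Dr -> Gamma_below Dr R S -> forall g, D' g ->
  exists sigma : {ffun vert g -> vert R} -> {ffun vert g -> vert S}, strict_inj sigma.
Proof.
case=> _ [rep _] [rho scheme] g Dg.
have [H [DrH [phi [[psi phiK psiK] arc_phi]]]] := rep g Dg.
have [rho_hom [rho_inj rho_Gam]] := scheme H DrH.
have arc_psi a b : arc a b -> arc (psi a) (psi b) by rewrite -arc_phi !psiK.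
have arc_phi' a b : arc a b -> arc (phi a) (phi b) by rewrite arc_phi.
pose pull (f : {ffun vert g -> vert R}) : {ffun vert H -> vert R} := [ffun h => f (psi h)].
have pull_strict f : is_strict f -> is_strict (pull f).
  exact: strict_comp (can_inj psiK) arc_psi.
have rho_strict f : is_strict f -> is_strict (rho H (pull f)).
  move=> /pull_strict sf; have /strictP[hf _] := sf.
  exact: strict_Gam (rho_hom _ hf) sf (rho_Gam _ hf).
exists (fun f => [ffun v => rho H (pull f) (phi v)]); split.
  by move=> f /rho_strict; apply: strict_comp (can_inj phiK) arc_phi'.
move=> f1 f2 /pull_strict/strictP[h1 _] /pull_strict/strictP[h2 _] e.
have e_rho : rho H (pull f1) = rho H (pull f2).
  by apply/ffunP => h; move/ffunP: e => /(_ (psi h)); rewrite !ffunE psiK.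
have /ffunP e_pull : pull f1 = pull f2 by apply: rho_inj.
by apply/ffunP => v; have := e_pull (phi v); rewrite !ffunE phiK.
Qed.

Lemma choose_strict_inj (R S : digraph) (P : digraph -> Prop) :
  (forall g, P g -> exists s : {ffun vert g -> vert R} -> {ffun vert g -> vert S},
     strict_inj s) ->
  exists sigma : forall g : digraph, {ffun vert g -> vert R} -> {ffun vert g -> vert S},
    forall g, P g -> strict_inj (sigma g).
Proof.
move=> h.
have pick_g g : exists s : {ffun vert g -> vert R} -> {ffun vert g -> vert S},
    P g -> strict_inj s.
  case: (classic (P g)) => [/h[s hs] | not_P]; first by exists s.
  by exists (fun _ => [ffun _ => some_vertex S]) => /not_P.
exists (fun g => proj1_sig (constructive_indefinite_description _ (pick_g g))).
by move=> g; apply: (proj2_sig (constructive_indefinite_description _ (pick_g g))).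
Qed.

Definition blocks (G : digraph) (p : vert G -> {set vert G}) : finType :=
  {A : {set vert G} | [exists v, A == p v]}.

Definition block_arc (G : digraph) (p : vert G -> {set vert G}) : rel (blocks p) :=
  fun A B => [exists a in val A, exists b in val B, arc a b].

Section QuotientScheme.
Variable ar : forall (G : digraph) (p : vert G -> {set vert G}), rel (blocks p).

Definition block_digraph (G : digraph) (p : vert G -> {set vert G})
    (p_ne : 0 < #|blocks p|) : digraph :=
  @Digraph (blocks p) (@ar G p) p_ne.

Definition qdigraph (G H : digraph) (xi : {ffun vert G -> vert H}) : digraph :=
  @block_digraph G (Gam xi) (qvert_nonempty xi).

Variables R S : digraph.

Hypothesis qarc_ar : forall G (xi : {ffun vert G -> vert R}) (A B : qvert xi),
  qarc A B -> @ar G (Gam xi) A B.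
Hypothesis qiota_ar_strict : forall G (xi : {ffun vert G -> vert R}),
  is_hom xi -> @is_strict (qdigraph xi) R (qiota xi).

Definition scheme_of
    (sigma : forall g : digraph, {ffun vert g -> vert R} -> {ffun vert g -> vert S})
    (G : digraph) (xi : {ffun vert G -> vert R}) : {ffun vert G -> vert S} :=
  [ffun v => sigma (qdigraph xi) (qiota xi) (qpi xi v)].

Section InjectionScheme.
Variable sigma : forall g : digraph, {ffun vert g -> vert R} -> {ffun vert g -> vert S}.
Arguments sigma : clear implicits.
Variable Dr : digraph -> Prop.
Hypothesis sigma_inj : forall G (xi : {ffun vert G -> vert R}),
  Dr G -> is_hom xi -> strict_inj (sigma (qdigraph xi)).

(** The quotient digraph only depends on the partition into components, so
    [sigma] is injective across quotients of maps with equal components.  Any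
    projection [pi] onto the blocks is determined by its values [val \o pi]. *)
Lemma sigma_blocks_inj (G : digraph) (p1 p2 : vert G -> {set vert G})
    (ne1 : 0 < #|blocks p1|) (ne2 : 0 < #|blocks p2|)
    (t1 : {ffun blocks p1 -> vert R}) (t2 : {ffun blocks p2 -> vert R})
    (pi1 : vert G -> blocks p1) (pi2 : vert G -> blocks p2) :
  p1 = p2 -> (forall v, val (pi1 v) = p1 v) -> (forall v, val (pi2 v) = p2 v) ->
  strict_inj (sigma (block_digraph ne1)) ->
  @is_strict (block_digraph ne1) R t1 -> @is_strict (block_digraph ne2) R t2 ->
  (forall v, sigma (block_digraph ne1) t1 (pi1 v) = sigma (block_digraph ne2) t2 (pi2 v)) ->
  forall v, t1 (pi1 v) = t2 (pi2 v).
Proof.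
move=> ep; subst p2; rewrite (bool_irrelevance ne2 ne1) => val1 val2 [_ inj] s1 s2 e.
have epi v : pi2 v = pi1 v by apply: val_inj; rewrite val1 val2.
have e_sigma : sigma (block_digraph ne1) t1 = sigma (block_digraph ne1) t2.
  apply/ffunP => -[A hA]; have [v /eqP eA] := existsP hA.
  have -> : exist _ A hA = pi1 v by apply: val_inj; rewrite /= val1.
  exact: etrans (e v) (congr1 _ (epi v)).
have -> : t1 = t2 := inj t1 t2 s1 s2 e_sigma.
by move=> v; rewrite epi.
Qed.

Lemma scheme_strict G (xi : {ffun vert G -> vert R}) :
  Dr G -> is_hom xi -> @is_strict (qdigraph xi) S (sigma (qdigraph xi) (qiota xi)).
Proof. by move=> DG hx; apply: (sigma_inj DG hx).1; apply: qiota_ar_strict. Qed.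

Lemma scheme_hom G (xi : {ffun vert G -> vert R}) :
  Dr G -> is_hom xi -> is_hom (scheme_of sigma xi).
Proof.
move=> DG hx; have /strictP[/homP hs _] := scheme_strict DG hx.
by apply/homP => v w vw; rewrite !ffunE; apply/hs/qarc_ar/qarc_pi.
Qed.

(** The scheme keeps the components: it identifies exactly the adjacent pairs
    identified by [xi]. *)
Lemma scheme_Gam G (xi : {ffun vert G -> vert R}) :
  Dr G -> is_hom xi -> forall v, Gam (scheme_of sigma xi) v = Gam xi v.
Proof.
move=> DG hx; apply: Gam_ext => a b ab; rewrite !ffunE.
case: (xi a =P xi b) => [e | ne]; first by rewrite (qpi_adjacent ab e) !eqxx.
apply/negbTE; apply: (strict_adjacent (scheme_strict DG hx)).
  by apply/eqP => /qpi_fiber.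
by case/orP: ab => ab; apply/orP; [left | right]; apply/qarc_ar/qarc_pi.
Qed.

(** [xi] is recovered from its image: equal images have equal components, hence
    the same quotient, on which [sigma] is injective. *)
Lemma scheme_inj G : Dr G ->
  {in [pred xi | is_hom xi] &, injective (@scheme_of sigma G)}.
Proof.
move=> DG xi1 xi2; rewrite !inE => h1 h2 e.
have eGam : Gam xi1 = Gam xi2.
  by apply: functional_extensionality => v; rewrite -scheme_Gam // e scheme_Gam.
have := sigma_blocks_inj (pi1 := qpi xi1) (pi2 := qpi xi2) eGam
  (fun=> erefl) (fun=> erefl) (sigma_inj DG h1) (qiota_ar_strict h1) (qiota_ar_strict h2).
move=> agree; apply/ffunP => v; rewrite -(qiota_pi xi1) -(qiota_pi xi2).
by apply: agree => w; move/ffunP: e => /(_ w); rewrite !ffunE.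
Qed.

Lemma scheme_strong : strong_Gamma_scheme Dr R S (scheme_of sigma).
Proof.
move=> G DG; split; first by move=> xi; apply: scheme_hom.
by split; [apply: scheme_inj | move=> xi; apply: scheme_Gam].
Qed.

End InjectionScheme.

Definition qclass (D' : digraph -> Prop) (g : digraph) : Prop :=
  exists (G : digraph) (xi : {ffun vert G -> vert R}),
    D' G /\ is_hom xi /\ g = qdigraph xi.

Theorem Gamma_below_quotients (D' Dr : digraph -> Prop) :
  rep_system D' Dr -> (forall g, qclass D' g -> D' g) ->
  (Gamma_below Dr R S <->
     (forall g, qclass D' g ->
        exists sigma : {ffun vert g -> vert R} -> {ffun vert g -> vert S},
          strict_inj sigma)) /\
  (forall sigma : forall g : digraph,
       {ffun vert g -> vert R} -> {ffun vert g -> vert S},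
     (forall g, qclass D' g -> strict_inj (sigma g)) ->
     strong_Gamma_scheme Dr R S (scheme_of sigma)).
Proof.
move=> rep closed.
have scheme sigma : (forall g, qclass D' g -> strict_inj (sigma g)) ->
    strong_Gamma_scheme Dr R S (scheme_of sigma).
  move=> inj; apply: scheme_strong => G xi DG hx; apply: inj.
  by exists G, xi; split; [exact: rep.1 | split].
split=> //; split=> [below g /closed | /choose_strict_inj[sigma /scheme]].
  exact: Gamma_below_strict_inj rep below g.
by exists (scheme_of sigma).
Qed.

End QuotientScheme.

Theorem proposition2 :
  (* Part (a) *)
  (forall (D' Dr : digraph -> Prop), rep_system D' Dr ->
   forall R : digraph, D' R ->
   (forall g, Gclass D' R g -> D' g) ->
   forall S : digraph,
     (Gamma_below Dr R S <->
        (forall g, Gclass D' R g ->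
           exists sigma : {ffun vert g -> vert R} -> {ffun vert g -> vert S},
             strict_inj sigma)) /\
     (forall sigma : forall g : digraph,
          {ffun vert g -> vert R} -> {ffun vert g -> vert S},
        (forall g, Gclass D' R g -> strict_inj (sigma g)) ->
        strong_Gamma_scheme Dr R S
          (fun G xi => [ffun v => sigma (quot xi) (qiota xi) (qpi xi v)]))) /\
  (* Part (b) *)
  (forall (D' Dr : digraph -> Prop),
   ((forall G, D' G -> in_P G) \/ (forall G, D' G -> in_Pstar G)) ->
   rep_system D' Dr ->
   forall R : digraph, D' R ->
   (forall t, Tclass D' R t -> D' t) ->
   forall S : digraph,
     (Gamma_below Dr R S <->
        (forall t, Tclass D' R t ->
           exists sigma : {ffun vert t -> vert R} -> {ffun vert t -> vert S},
             strict_inj sigma)) /\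
     (forall sigma : forall t : digraph,
          {ffun vert t -> vert R} -> {ffun vert t -> vert S},
        (forall t, Tclass D' R t -> strict_inj (sigma t)) ->
        strong_Gamma_scheme Dr R S
          (fun G xi => [ffun v => sigma (tquot xi) (qiota xi) (qpi xi v)]))).
Proof.
split=> [D' Dr rep R _ closed S | D' Dr posets rep R DR closed S].
  (* (a): the quotient [quot xi] is [qdigraph] for the arcs [block_arc]. *)
  exact: (@Gamma_below_quotients block_arc R S (fun _ _ _ _ => id)
            (fun _ _ => @qiota_strict _ _ _) D' Dr rep closed).
(* (b): [tquot xi] is [qdigraph] for the transitive hull of [block_arc];
   the target [R] is a (loopless) poset, hence transitive and antisymmetric. *)
have [trR antiR] : transitive (@arc R) /\ antisymmetric (@arc R).
  by apply: poset_trans_anti; case: posets => h; [left | right]; apply: h.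
pose hull G p := trans_hull_rel (@block_arc G p).
have qarc_hull G (xi : {ffun vert G -> vert R}) (A B : qvert xi) :
    qarc A B -> hull G (Gam xi) A B.
  by move=> AB; apply/existsP; exists B; rewrite connect0 andbT.
exact: (@Gamma_below_quotients hull R S qarc_hull
          (fun _ _ => qiota_tquot_strict trR antiR) D' Dr rep closed).
Qed.
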